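(* Let $f:\mathbb{R}_{\ge0}\to\mathbb{R}_{\ge0}$ be strictly increasing, let $\alpha\in[0,1)$, and let $$X(f,\alpha)=\{f(n)e^{2\pi i n\alpha}\ :\ n\in\mathbb{N}\}\subset\mathbb{C}.$$ If $X(f,\alpha)$ is $r$-relatively dense, then $\limsup_{n\to\infty} f(n)/\sqrt{n}<2r$. If $X(f,\alpha)$ is $s$-uniformly discrete, then $\liminf_{n\to\infty} f(n)/\sqrt{n}>s/2$.
   Context: $\mathbb{C}$ is identified with $\mathbb{R}^2$, and $B(x,r)$ denotes the open disk of radius $r$ centered at $x$. A set $X\subset\mathbb{C}$ is $r$-relatively dense ($r>0$) if $B(x,r)\cap X\ne\emptyset$ for every $x\in\mathbb{C}$. It is $s$-uniformly discrete ($s>0$) if $\mathrm{Card}(B(x,s)\cap X)\le1$ for every $x\in\mathbb{C}$. *)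

From Stdlib Require Import Reals.
From Coquelicot Require Import Coquelicot.
Open Scope R_scope.

Definition dist2 (p q : R * R) : R :=
  sqrt ((fst p - fst q) ^ 2 + (snd p - snd q) ^ 2).

Definition in_ball (x : R * R) (r : R) (p : R * R) : Prop := dist2 x p < r.

Definition Xset (f : R -> R) (alpha : R) (p : R * R) : Prop :=
  exists n : nat,
    p = (f (INR n) * cos (2 * PI * INR n * alpha),
         f (INR n) * sin (2 * PI * INR n * alpha)).

Definition rel_dense (r : R) (X : R * R -> Prop) : Prop :=
  0 < r /\ forall x : R * R, exists p, in_ball x r p /\ X p.

(* X is s-uniformly discrete: Card (B(x,s) ∩ X) <= 1 for every x *)
Definition unif_discrete (s : R) (X : R * R -> Prop) : Prop :=
  0 < s /\ forall x : R * R, forall p q,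
    in_ball x s p -> X p -> in_ball x s q -> X q -> p = q.

(** The orbit points [X_n = f(n) e^{2 pi i n alpha}] have pairwise distinct moduli,
    so they are pairwise distinct, and [X_0, ..., X_n] all lie in the square
    [[-f(n), f(n)]^2].

    If [X] is [r]-relatively dense, each of the [K^2] disjoint [r]-balls centred on a
    grid of mesh [2r] around the origin catches a distinct [X_m] with
    [|X_m| < sqrt 2 r K]; one of these [m] is at least [K^2 - 1], whence
    [f(K^2 - 1) < sqrt 2 r K] and [f(n) <= sqrt 2 r (sqrt n + 1)].

    If [X] is [s]-uniformly discrete, two points in a square cell of side [7/5 s]
    lie in a common [s]-ball, so each cell of a tiling of [[-f(n), f(n)]^2] holds at
    most one [X_m], [m <= n]; counting cells gives
    [n + 1 <= (2 f(n) / (7/5 s) + 1)^2].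

    Hence [limsup f(n)/sqrt n <= sqrt 2 r < 2 r] and
    [liminf f(n)/sqrt n >= 7/10 s > s / 2]. *)

From Stdlib Require Import Reals ZArith Lra Lia FinFun ClassicalEpsilon.
From Coquelicot Require Import Coquelicot.
Open Scope R_scope.

Lemma bInjective_le (g : nat -> nat) (K M : nat) :
  (forall i, (i < K)%nat -> (g i < M)%nat) -> bInjective K g -> (K <= M)%nat.
Proof.
  intros Hg Hinj. destruct (Nat.le_gt_cases K M) as [|HMK]; [assumption|].
  exfalso.
  assert (HF : bFun K g) by (intros x Hx; specialize (Hg x Hx); lia).
  destruct (proj1 (bInjective_bSurjective HF) Hinj M HMK) as [x [Hx Hgx]].
  specialize (Hg x Hx); lia.
Qed.

Definition nat_floor (z : R) : nat := Z.to_nat (Int_part z).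

Lemma nat_floor_spec z : 0 <= z -> INR (nat_floor z) <= z < INR (nat_floor z) + 1.
Proof.
  intros Hz. destruct (base_Int_part z) as [H1 H2].
  assert (Hge : (0 <= Int_part z)%Z).
  { assert (Hlt : IZR (-1) < IZR (Int_part z)) by lra. apply lt_IZR in Hlt. lia. }
  unfold nat_floor. rewrite INR_IZR_INZ, Z2Nat.id by exact Hge. lra.
Qed.

Lemma nat_floor_le_compat z w : 0 <= z -> z <= w -> (nat_floor z <= nat_floor w)%nat.
Proof.
  intros Hz Hzw. destruct (nat_floor_spec z Hz), (nat_floor_spec w ltac:(lra)).
  assert (Hlt : INR (nat_floor z) < INR (S (nat_floor w))) by (rewrite S_INR; lra).
  apply INR_lt in Hlt. lia.
Qed.

Lemma nat_floor_eq_dist z w :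
  0 <= z -> 0 <= w -> nat_floor z = nat_floor w -> Rabs (z - w) < 1.
Proof.
  intros Hz Hw E. pose proof (nat_floor_spec z Hz). pose proof (nat_floor_spec w Hw).
  rewrite E in *. apply Rabs_def1; lra.
Qed.

Lemma INR_eq_of_dist_lt_1 a b : Rabs (INR a - INR b) < 1 -> a = b.
Proof.
  intros H. apply Rabs_def2 in H.
  destruct (Nat.lt_total a b) as [L|[E|L]]; [|exact E|];
    apply le_INR in L; rewrite S_INR in L; lra.
Qed.

Lemma INR_sqrt_le n : INR (Nat.sqrt n) <= sqrt (INR n).
Proof.
  rewrite <- (sqrt_square (INR (Nat.sqrt n))) by apply pos_INR.
  apply sqrt_le_1_alt. rewrite <- mult_INR. apply le_INR.
  apply Nat.sqrt_spec. lia.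
Qed.

Lemma sqrt_INR_ge_10 n : (100 <= n)%nat -> 10 <= sqrt (INR n).
Proof.
  intros Hn. rewrite <- (sqrt_square 10) by lra. apply sqrt_le_1_alt.
  apply le_INR in Hn. simpl INR in Hn. lra.
Qed.

Lemma LimSup_seq_lt_of_eventually (u : nat -> R) (c L : R) :
  c < L -> eventually (fun n => u n <= c) -> Rbar_lt (LimSup_seq u) L.
Proof.
  intros HcL Hev. apply LimSup_le in Hev. rewrite LimSup_seq_const in Hev.
  destruct (LimSup_seq u); simpl in *; lra.
Qed.

Lemma LimInf_seq_gt_of_eventually (u : nat -> R) (c L : R) :
  L < c -> eventually (fun n => c <= u n) -> Rbar_lt L (LimInf_seq u).
Proof.
  intros HLc Hev. apply LimInf_le in Hev. rewrite LimInf_seq_const in Hev.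
  destruct (LimInf_seq u); simpl in *; lra.
Qed.

Lemma in_ball_radius_pos x r p : in_ball x r p -> 0 < r.
Proof.
  unfold in_ball, dist2. pose proof (sqrt_pos ((fst x - fst p) ^ 2 + (snd x - snd p) ^ 2)).
  lra.
Qed.

Lemma Rabs_le_sqrt_sum_sq u v : Rabs u <= sqrt (u ^ 2 + v ^ 2).
Proof. rewrite <- sqrt_Rsqr_abs. apply sqrt_le_1_alt. unfold Rsqr. nra. Qed.

Lemma in_ball_coords x r p :
  in_ball x r p -> Rabs (fst x - fst p) < r /\ Rabs (snd x - snd p) < r.
Proof.
  unfold in_ball, dist2. intros H. split.
  - eapply Rle_lt_trans; [apply Rabs_le_sqrt_sum_sq | exact H].
  - rewrite Rplus_comm in H. eapply Rle_lt_trans; [apply Rabs_le_sqrt_sum_sq | exact H].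
Qed.

Lemma in_ball_of_sq x r p :
  0 < r -> (fst x - fst p) ^ 2 + (snd x - snd p) ^ 2 < r ^ 2 -> in_ball x r p.
Proof.
  intros Hr H. unfold in_ball, dist2. rewrite <- (sqrt_pow2 r) by lra.
  apply sqrt_lt_1_alt. split; [|exact H].
  pose proof (pow2_ge_0 (fst x - fst p)). pose proof (pow2_ge_0 (snd x - snd p)). lra.
Qed.

(* [(7/5)^2 < 2]: the half-diagonal of a square of side [7/5 s] is shorter than [s]. *)
Lemma close_points_share_ball s p q :
  0 < s -> Rabs (fst p - fst q) < 7/5 * s -> Rabs (snd p - snd q) < 7/5 * s ->
  exists x, in_ball x s p /\ in_ball x s q.
Proof.
  intros Hs Hx Hy.
  apply Rabs_def2 in Hx, Hy.
  exists ((fst p + fst q) / 2, (snd p + snd q) / 2).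
  split; apply in_ball_of_sq; simpl; nra.
Qed.

Lemma unif_discrete_close s (X : R * R -> Prop) p q :
  unif_discrete s X -> X p -> X q ->
  Rabs (fst p - fst q) < 7/5 * s -> Rabs (snd p - snd q) < 7/5 * s -> p = q.
Proof.
  intros [Hs Hu] Hp Hq Hx Hy.
  destruct (close_points_share_ball s p q Hs Hx Hy) as [x [Hxp Hxq]].
  exact (Hu x p q Hxp Hp Hxq Hq).
Qed.

Definition grid_center (r : R) (K i : nat) : R * R :=
  (r * (2 * INR (i / K) + 1 - INR K), r * (2 * INR (i mod K) + 1 - INR K)).

Lemma grid_balls_disjoint r K i j p :
  in_ball (grid_center r K i) r p -> in_ball (grid_center r K j) r p -> i = j.
Proof.
  intros Hi Hj.
  pose proof (in_ball_radius_pos _ _ _ Hi) as Hr.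
  destruct (in_ball_coords _ _ _ Hi) as [Hi1 Hi2], (in_ball_coords _ _ _ Hj) as [Hj1 Hj2].
  simpl in Hi1, Hi2, Hj1, Hj2. apply Rabs_def2 in Hi1, Hi2, Hj1, Hj2.
  assert (Ea : (i / K)%nat = (j / K)%nat) by (apply INR_eq_of_dist_lt_1, Rabs_def1; nra).
  assert (Eb : (i mod K)%nat = (j mod K)%nat) by (apply INR_eq_of_dist_lt_1, Rabs_def1; nra).
  rewrite (Nat.div_mod_eq i K), (Nat.div_mod_eq j K), Ea, Eb. reflexivity.
Qed.

Lemma grid_ball_sq r K i p :
  (i < K * K)%nat -> in_ball (grid_center r K i) r p ->
  fst p ^ 2 + snd p ^ 2 < 2 * (r * INR K) ^ 2.
Proof.
  intros HiK Hi.
  assert (HK : (0 < K)%nat) by (destruct K; lia).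
  assert (Ha : (i / K + 1 <= K)%nat).
  { enough (i / K < K)%nat by lia. apply Nat.Div0.div_lt_upper_bound; lia. }
  assert (Hb : (i mod K + 1 <= K)%nat).
  { enough (i mod K < K)%nat by lia. apply Nat.mod_upper_bound; lia. }
  apply le_INR in Ha, Hb. rewrite plus_INR in Ha, Hb. simpl INR in Ha, Hb.
  pose proof (pos_INR (i / K)). pose proof (pos_INR (i mod K)).
  destruct (in_ball_coords _ _ _ Hi) as [H1 H2]. simpl in H1, H2.
  apply Rabs_def2 in H1, H2.
  pose proof (in_ball_radius_pos _ _ _ Hi) as Hr.
  assert (Hx : Rabs (fst p) < r * INR K) by (apply Rabs_def1; nra).
  assert (Hy : Rabs (snd p) < r * INR K) by (apply Rabs_def1; nra).
  rewrite <- (Rabs_pos_eq (r * INR K)) in Hx, Hy by nra.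
  apply Rsqr_lt_abs_1 in Hx, Hy. unfold Rsqr in Hx, Hy. nra.
Qed.

Definition cell_coord (t R0 u : R) : nat := nat_floor ((u + R0) / t).

Lemma cell_coord_shift_bounds t R0 u :
  0 < t -> Rabs u <= R0 -> 0 <= (u + R0) / t <= 2 * R0 / t.
Proof.
  intros Ht Hu. apply Rabs_le_between in Hu. split.
  - apply Rdiv_le_0_compat; lra.
  - apply Rmult_le_compat_r; [left; apply Rinv_0_lt_compat|]; lra.
Qed.

Lemma cell_coord_lt t R0 u :
  0 < t -> Rabs u <= R0 -> (cell_coord t R0 u < S (nat_floor (2 * R0 / t)))%nat.
Proof.
  intros Ht Hu. destruct (cell_coord_shift_bounds t R0 u Ht Hu).
  apply Nat.lt_succ_r, nat_floor_le_compat; assumption.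
Qed.

Lemma cell_coord_eq_dist t R0 u v :
  0 < t -> Rabs u <= R0 -> Rabs v <= R0 ->
  cell_coord t R0 u = cell_coord t R0 v -> Rabs (u - v) < t.
Proof.
  intros Ht Hu Hv E.
  destruct (cell_coord_shift_bounds t R0 u Ht Hu) as [Hu0 _].
  destruct (cell_coord_shift_bounds t R0 v Ht Hv) as [Hv0 _].
  pose proof (nat_floor_eq_dist _ _ Hu0 Hv0 E) as Hd.
  replace (u - v) with (((u + R0) / t - (v + R0) / t) * t) by (field; lra).
  rewrite Rabs_mult, (Rabs_pos_eq t) by lra. nra.
Qed.

Definition orbit_pt (f : R -> R) (alpha : R) (n : nat) : R * R :=
  (f (INR n) * cos (2 * PI * INR n * alpha), f (INR n) * sin (2 * PI * INR n * alpha)).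

Lemma Xset_orbit_pt f alpha n : Xset f alpha (orbit_pt f alpha n).
Proof. exists n. reflexivity. Qed.

Lemma orbit_pt_sq f alpha n :
  fst (orbit_pt f alpha n) ^ 2 + snd (orbit_pt f alpha n) ^ 2 = f (INR n) ^ 2.
Proof.
  simpl. pose proof (sin2_cos2 (2 * PI * INR n * alpha)) as H. unfold Rsqr in H. nra.
Qed.

Section Orbit.

Variables (f : R -> R) (alpha : R).
Hypothesis f_nonneg : forall x, 0 <= x -> 0 <= f x.
Hypothesis f_incr : forall x y, 0 <= x -> x < y -> f x < f y.

Lemma f_INR_le m n : (m <= n)%nat -> f (INR m) <= f (INR n).
Proof.
  intros H. destruct (Nat.eq_dec m n) as [->|E]; [lra|].
  left. apply f_incr; [apply pos_INR | apply lt_INR; lia].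
Qed.

Lemma orbit_pt_inj m n : orbit_pt f alpha m = orbit_pt f alpha n -> m = n.
Proof.
  intros E.
  assert (Esq : f (INR m) ^ 2 = f (INR n) ^ 2)
    by (rewrite <- (orbit_pt_sq f alpha m), <- (orbit_pt_sq f alpha n), E; reflexivity).
  pose proof (f_nonneg (INR m) (pos_INR m)). pose proof (f_nonneg (INR n) (pos_INR n)).
  assert (Ef : f (INR m) = f (INR n)) by nra.
  destruct (Nat.lt_total m n) as [L|[L|L]]; [|exact L|]; exfalso.
  - pose proof (f_incr (INR m) (INR n) (pos_INR m) (lt_INR _ _ L)). lra.
  - pose proof (f_incr (INR n) (INR m) (pos_INR n) (lt_INR _ _ L)). lra.
Qed.

Lemma orbit_pt_coords_le m n : (m <= n)%nat ->
  Rabs (fst (orbit_pt f alpha m)) <= f (INR n) /\ Rabs (snd (orbit_pt f alpha m)) <= f (INR n).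
Proof.
  intros Hmn. pose proof (f_nonneg (INR n) (pos_INR n)).
  rewrite <- (Rabs_pos_eq (f (INR n))) by assumption.
  apply triangle_rectangle_le. unfold Rsqr.
  pose proof (orbit_pt_sq f alpha m). pose proof (f_INR_le m n Hmn).
  pose proof (f_nonneg (INR m) (pos_INR m)). nra.
Qed.

Lemma rel_dense_square_bound r K : rel_dense r (Xset f alpha) -> (1 <= K)%nat ->
  f (INR (K * K - 1)) ^ 2 < 2 * (r * INR K) ^ 2.
Proof.
  intros [_ Hd] HK.
  destruct (choice (fun i n => in_ball (grid_center r K i) r (orbit_pt f alpha n))) as [g Hg].
  { intros i. destruct (Hd (grid_center r K i)) as [p [Hp [n ->]]]. exists n. exact Hp. }
  destruct (Rlt_or_le (f (INR (K * K - 1)) ^ 2) (2 * (r * INR K) ^ 2)) as [|Hge];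
    [assumption|exfalso].
  assert (Hlow : forall i, (i < K * K)%nat -> (g i < K * K - 1)%nat).
  { intros i Hi. destruct (Nat.lt_ge_cases (g i) (K * K - 1)) as [|Hgi]; [assumption|exfalso].
    pose proof (grid_ball_sq r K i _ Hi (Hg i)) as Hsq. rewrite orbit_pt_sq in Hsq.
    pose proof (f_INR_le _ _ Hgi). pose proof (f_nonneg (INR (K * K - 1)) (pos_INR _)). nra. }
  assert (Hcard : (K * K <= K * K - 1)%nat).
  { apply (bInjective_le g); [exact Hlow|]. intros i j _ _ E.
    apply (grid_balls_disjoint r K i j (orbit_pt f alpha (g i))); [|rewrite E]; apply Hg. }
  nia.
Qed.

Lemma rel_dense_growth r n : rel_dense r (Xset f alpha) ->
  f (INR n) ^ 2 < 2 * (r * (sqrt (INR n) + 1)) ^ 2.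
Proof.
  intros Hd. pose proof (proj1 Hd) as Hr.
  set (K := S (Nat.sqrt n)).
  assert (Hn : (n <= K * K - 1)%nat) by (pose proof (Nat.sqrt_spec n (Nat.le_0_l n)); lia).
  pose proof (rel_dense_square_bound r K Hd ltac:(lia)) as HK.
  assert (HKn : INR K <= sqrt (INR n) + 1).
  { unfold K. rewrite S_INR. pose proof (INR_sqrt_le n). lra. }
  pose proof (f_INR_le _ _ Hn). pose proof (f_nonneg (INR n) (pos_INR n)).
  pose proof (pos_INR K).
  assert (f (INR n) ^ 2 <= f (INR (K * K - 1)) ^ 2) by (apply pow_incr; lra).
  assert ((r * INR K) ^ 2 <= (r * (sqrt (INR n) + 1)) ^ 2) by (apply pow_incr; split; nra).
  lra.
Qed.

Lemma limsup_lt_of_rel_dense r : rel_dense r (Xset f alpha) ->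
  Rbar_lt (LimSup_seq (fun n => f (INR n) / sqrt (INR n))) (Finite (2 * r)).
Proof.
  intros Hd. pose proof (proj1 Hd) as Hr.
  apply (LimSup_seq_lt_of_eventually _ (19/10 * r)); [lra|].
  exists 100%nat. intros n Hn.
  pose proof (sqrt_INR_ge_10 n Hn). pose proof (rel_dense_growth r n Hd).
  pose proof (f_nonneg (INR n) (pos_INR n)).
  apply Rle_div_l; [lra|].
  set (q := sqrt (INR n)) in *. set (F := f (INR n)) in *.
  apply Rsqr_incr_0_var; unfold Rsqr; nra.
Qed.

Lemma unif_discrete_count s n : unif_discrete s (Xset f alpha) ->
  INR (S n) <= (2 * f (INR n) / (7/5 * s) + 1) ^ 2.
Proof.
  intros Hd. pose proof (proj1 Hd) as Hs.
  set (t := 7/5 * s). set (R0 := f (INR n)). set (M := S (nat_floor (2 * R0 / t))).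
  assert (Ht : 0 < t) by (unfold t; lra).
  assert (HR0 : 0 <= R0) by apply f_nonneg, pos_INR.
  set (cx := fun m => cell_coord t R0 (fst (orbit_pt f alpha m))).
  set (cy := fun m => cell_coord t R0 (snd (orbit_pt f alpha m))).
  assert (Hcell : forall m, (m < S n)%nat -> (cx m < M)%nat /\ (cy m < M)%nat).
  { intros m Hm. destruct (orbit_pt_coords_le m n ltac:(lia)).
    split; apply cell_coord_lt; assumption. }
  assert (HN : (S n <= M * M)%nat).
  { apply (bInjective_le (fun m => M * cx m + cy m)%nat).
    - intros m Hm. destruct (Hcell m Hm). nia.
    - intros i j Hi Hj E.
      destruct (Hcell i Hi) as [_ Hyi], (Hcell j Hj) as [_ Hyj].
      destruct (Nat.div_mod_unique M _ _ _ _ Hyi Hyj E) as [Ex Ey].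
      destruct (orbit_pt_coords_le i n ltac:(lia)), (orbit_pt_coords_le j n ltac:(lia)).
      apply orbit_pt_inj, (unif_discrete_close s _ _ _ Hd); try apply Xset_orbit_pt;
        apply (cell_coord_eq_dist t R0); assumption. }
  assert (HM : INR M <= 2 * R0 / t + 1).
  { unfold M. rewrite S_INR. assert (Hw : 0 <= 2 * R0 / t) by (apply Rdiv_le_0_compat; lra).
    pose proof (nat_floor_spec _ Hw). lra. }
  apply le_INR in HN. rewrite mult_INR in HN.
  pose proof (pos_INR M). fold t R0.
  assert (INR M * INR M <= (2 * R0 / t + 1) ^ 2) by (rewrite <- Rsqr_pow2; apply Rsqr_incr_1; lra).
  lra.
Qed.

Lemma unif_discrete_growth s n : unif_discrete s (Xset f alpha) ->
  7/10 * s * (sqrt (INR n) - 1) <= f (INR n).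
Proof.
  intros Hd. pose proof (proj1 Hd) as Hs.
  pose proof (unif_discrete_count s n Hd) as Hc. rewrite S_INR in Hc.
  pose proof (f_nonneg (INR n) (pos_INR n)). pose proof (pow2_sqrt (INR n) (pos_INR n)).
  set (q := sqrt (INR n)) in *. set (w := 2 * f (INR n) / (7/5 * s)) in *.
  assert (Hw : 0 <= w) by (apply Rdiv_le_0_compat; lra).
  assert (Hqw : q <= w + 1) by (apply Rsqr_incr_0_var; unfold Rsqr; nra).
  assert (Ef : f (INR n) = 7/10 * s * w) by (unfold w; field; lra).
  rewrite Ef. nra.
Qed.

Lemma liminf_gt_of_unif_discrete s : unif_discrete s (Xset f alpha) ->
  Rbar_lt (Finite (s / 2)) (LimInf_seq (fun n => f (INR n) / sqrt (INR n))).
Proof.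
  intros Hd. pose proof (proj1 Hd) as Hs.
  apply (LimInf_seq_gt_of_eventually _ (3/5 * s)); [lra|].
  exists 100%nat. intros n Hn.
  pose proof (sqrt_INR_ge_10 n Hn). pose proof (unif_discrete_growth s n Hd).
  apply (Rle_div_r _ _ (sqrt (INR n))); [lra|].
  assert (0 <= s * (sqrt (INR n) - 10)) by (apply Rmult_le_pos; lra). lra.
Qed.

End Orbit.

Theorem lemma1 (f : R -> R) (alpha : R)
  (Hf_nonneg : forall x, 0 <= x -> 0 <= f x)
  (Hf_incr : forall x y, 0 <= x -> x < y -> f x < f y)
  (Halpha : 0 <= alpha < 1) :
  (forall r : R, rel_dense r (Xset f alpha) ->
     Rbar_lt (LimSup_seq (fun n => f (INR n) / sqrt (INR n))) (Finite (2 * r))) /\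
  (forall s : R, unif_discrete s (Xset f alpha) ->
     Rbar_lt (Finite (s / 2)) (LimInf_seq (fun n => f (INR n) / sqrt (INR n)))).
Proof.
  split.
  - exact (limsup_lt_of_rel_dense f alpha Hf_nonneg Hf_incr).
  - exact (liminf_gt_of_unif_discrete f alpha Hf_nonneg Hf_incr).
Qed.
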